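(* Let $n\ge2$, $q_1,q_2\in\mathbb{C}$ with $q_1q_2\ne0$ and $q=-q_2/q_1$ not a root of unity, and put $a=q/(1+q)$, $b=1/(1+q)$. Let $\overline{G}$ be the Zariski closure in $\mathrm{GL}_{n-1}(\mathbb{C})$ of $\rho(B_n)$, matrices being taken with respect to the basis $f_1,\dots,f_{n-1}$ of $\mathbf{F}$. (a) If $q_1^{n-2}q_2$ is not a root of unity, then for each $i=1,\dots,n-1$, $\overline{G}$ contains the one-parameter subgroup $H_i$ consisting of the matrices \[(1-\delta_{i,1})b(1-z)e_{i,i-1}+z\,e_{ii}+(1-\delta_{i,n-1})a(1-z)e_{i,i+1}+E(i),\qquad z\in\mathbb{C}\setminus\{0\}.\] (b) If $q_1^{n-2}q_2$ is a root of unity, then for each $i=1,\dots,n-1$, $\overline{G}$ contains the one-parameter subgroup $K_i$ consisting of the matrices \[(1-\delta_{i,1})b(w-w^{2-n})e_{i,i-1}+w^{2-n}e_{ii}+(1-\delta_{i,n-1})a(w-w^{2-n})e_{i,i+1}+w\,E(i),\qquad w\in\mathbb{C}\setminus\{0\}.\]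
   Context: $B_n$ is Artin's braid group with generators $\sigma_1,\dots,\sigma_{n-1}$. $\mathbf{E}=\mathbb{C}^n$ with basis $e_1,\dots,e_n$ carries the generalized Burau representation $\sigma_ie_j=q_1e_j$ ($j\ne i,i+1$), $\sigma_ie_{i+1}=-q_2e_i$, $\sigma_ie_i=(q_1+q_2)e_i+q_1e_{i+1}$. Let $f_i=q_2e_i+q_1e_{i+1}$ ($1\le i\le n-1$), $\mathbf{F}=\mathrm{span}(f_1,\dots,f_{n-1})$ (a $B_n$-submodule), and $\rho:B_n\to\mathrm{GL}(\mathbf{F})\cong\mathrm{GL}_{n-1}(\mathbb{C})$ the resulting representation, with matrices whose $j$th column is the coordinate vector of the image of $f_j$. Here $e_{ij}$ ($1\le i,j\le n-1$) denote the standard matrix units in $(n-1)\times(n-1)$ matrices, $E(i)=I_{n-1}-e_{ii}$, and $\delta$ is the Kronecker delta (terms with indices outside $1,\dots,n-1$ are absent). *)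

From HB Require Import structures.
From mathcomp Require Import all_boot all_order all_algebra.
From mathcomp Require Import reals.
From mathcomp Require Import complex.
From mathcomp Require Import mpoly.
Set Implicit Arguments. Unset Strict Implicit. Unset Printing Implicit Defensive.
Import Order.TTheory GRing.Theory Num.Theory.
Local Open Scope ring_scope.

Section Defs.
Variable C : fieldType.

Definition is_root_of_unity (x : C) : Prop := exists k : nat, (0 < k)%N /\ x ^+ k = 1.

(* Generalized Burau matrix of sigma_(g+1) on E = C^n, basis e_1..e_n
   (0-based index k : 'I_n stands for e_(k+1)); column j = coordinates of
   the image of e_(j+1):
     sigma_i e_j = q1 e_j (j <> i,i+1), sigma_i e_(i+1) = -q2 e_i,
     sigma_i e_i = (q1+q2) e_i + q1 e_(i+1). *)
Definition burau_gen (n : nat) (q1 q2 : C) (g : 'I_n.-1) : 'M[C]_n :=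
  \matrix_(k, j)
    (if (j == g :> nat) then
       (if (k == g :> nat) then q1 + q2 else if (k == g.+1 :> nat) then q1 else 0)
     else if (j == g.+1 :> nat) then
       (if (k == g :> nat) then - q2 else 0)
     else (if k == j then q1 else 0)).

(* Braid words: a letter (g, true) is sigma_(g+1), (g, false) its inverse. *)
Definition burau_word (n : nat) (q1 q2 : C) (w : seq ('I_n.-1 * bool)) : 'M[C]_n :=
  foldr (fun l M => (if l.2 then burau_gen q1 q2 l.1
                     else invmx (burau_gen q1 q2 l.1)) *m M) 1%:M w.

(* The n x (n-1) matrix whose (j+1)th column is f_(j+1) = q2 e_(j+1) + q1 e_(j+2). *)
Definition Fmx (n : nat) (q1 q2 : C) : 'M[C]_(n, n.-1) :=
  \matrix_(k, j) (if (k == j :> nat) then q2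
                  else if (k == j.+1 :> nat) then q1 else 0).

(* rho(B_n): the matrices M (w.r.t. the basis f_1..f_(n-1)) of the
   restrictions to F of the Burau action of braids beta in B_n, i.e.
   Fmx *m M = burau(beta) *m Fmx. *)
Definition rho_image (n : nat) (q1 q2 : C) (M : 'M[C]_n.-1) : Prop :=
  exists w : seq ('I_n.-1 * bool), Fmx n q1 q2 *m M = burau_word q1 q2 w *m Fmx n q1 q2.

Definition mx_coords (m : nat) (A : 'M[C]_m) : 'I_(m * m) -> C :=
  fun k => mxvec A 0 k.

Definition zariski_closure_GL (m : nat) (S : 'M[C]_m -> Prop) (g : 'M[C]_m) : Prop :=
  g \in unitmx /\
  forall p : {mpoly C[m * m]},
    (forall h, S h -> p.@[mx_coords h] = 0) -> p.@[mx_coords g] = 0.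

(* H_i(z) (0-based i):  b(1-z) e_(i,i-1) + z e_(ii) + a(1-z) e_(i,i+1) + E(i),
   terms with indices out of range being absent. *)
Definition Hmx (m : nat) (a b : C) (i : 'I_m) (z : C) : 'M[C]_m :=
  \matrix_(r, c)
    (if r == i then
       (if c == i then z
        else if (c.+1 == i :> nat) then b * (1 - z)
        else if (c == i.+1 :> nat) then a * (1 - z) else 0)
     else (if r == c then 1 else 0)).

(* K_i(w):  b(w - w^(2-n)) e_(i,i-1) + w^(2-n) e_(ii) + a(w - w^(2-n)) e_(i,i+1)
   + w E(i). *)
Definition Kmx (n : nat) (a b : C) (i : 'I_n.-1) (w : C) : 'M[C]_n.-1 :=
  \matrix_(r, c)
    (if r == i then
       (if c == i then w ^- (n - 2)
        else if (c.+1 == i :> nat) then b * (w - w ^- (n - 2))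
        else if (c == i.+1 :> nat) then a * (w - w ^- (n - 2)) else 0)
     else (if r == c then w else 0)).

End Defs.

(* With respect to
   f_1, ..., f_(n-1), rho(sigma_i), H_i(z) and K_i(w) all have the form
   x (1 - P_i) + y P_i for one rank-one idempotent P_i, with (x, y) equal to
   (q1, q2), (1, z) and (w, w^(2-n)) respectively; such "pencils" multiply
   coordinatewise.  Their entries are Laurent polynomials in a parameter, and a
   Laurent polynomial vanishing at all powers of an element that is not a root
   of unity vanishes on C^*.
   (a) rho(B_n) contains rho(sigma_i)^k and the scalar c^l, where
   c = (q1^(n-1) q)^n = rho(sigma_1 ... sigma_(n-1))^n; interpolating in c puts
   q1^(-k) rho(sigma_i)^k = H_i((-q)^k) in the closure, and interpolating in -q
   then gives every H_i(z).
   (b) If (q1^(n-2) q2)^N = 1, then rho(sigma_i)^(N j) = K_i(u^j) with u = q1^N,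
   which is not a root of unity because q is not. *)

Set Warnings "-notation-overridden,-ambiguous-paths,-notation-incompatible-prefix".
From HB Require Import structures.
From mathcomp Require Import all_boot all_order all_algebra.
From mathcomp Require Import reals complex mpoly.
From mathcomp Require Import zify ring.
Set Implicit Arguments. Unset Strict Implicit. Unset Printing Implicit Defensive.
Import Order.TTheory GRing.Theory Num.Theory.
Local Open Scope ring_scope.

Section LaurentFunctions.
Variable C : fieldType.
Implicit Types (f g : C -> C) (x w : C).

Definition laurent f := exists (N : nat) (P : {poly C}),
  forall w, w != 0 -> w ^+ N * f w = P.[w].

Lemma eq_laurent f g : f =1 g -> laurent f -> laurent g.
Proof. by move=> eq_fg [N [P fP]]; exists N, P => w w0; rewrite -eq_fg fP. Qed.

Lemma laurent_cst c : laurent (fun=> c).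
Proof. by exists 0%N, c%:P => w _; rewrite mul1r hornerC. Qed.

Lemma laurent_id : laurent id.
Proof. by exists 0%N, 'X => w _; rewrite mul1r hornerX. Qed.

Lemma laurent_Vexp k : laurent (fun w => w ^- k).
Proof. by exists k, 1 => w w0; rewrite hornerC mulfV ?expf_neq0. Qed.

Lemma laurentD f g : laurent f -> laurent g -> laurent (fun w => f w + g w).
Proof.
move=> [N1 [P1 fP1]] [N2 [P2 gP2]]; exists (N1 + N2)%N, ('X^N2 * P1 + 'X^N1 * P2).
by move=> w w0; rewrite !hornerE -fP1 // -gP2 // exprD; ring.
Qed.

Lemma laurentM f g : laurent f -> laurent g -> laurent (fun w => f w * g w).
Proof.
move=> [N1 [P1 fP1]] [N2 [P2 gP2]]; exists (N1 + N2)%N, (P1 * P2).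
by move=> w w0; rewrite hornerM -fP1 // -gP2 // exprD; ring.
Qed.

Lemma laurentX f k : laurent f -> laurent (fun w => f w ^+ k).
Proof.
move=> lf; elim: k => [|k IHk]; first exact: eq_laurent (laurent_cst 1).
by apply: eq_laurent (laurentM lf IHk) => w; rewrite exprS.
Qed.

Lemma laurent_sum (I : Type) (r : seq I) (F : I -> C -> C) :
  (forall i, laurent (F i)) -> laurent (fun w => \sum_(i <- r) F i w).
Proof.
move=> lF; elim: r => [|i r IHr].
  by apply: eq_laurent (laurent_cst 0) => w; rewrite big_nil.
by apply: eq_laurent (laurentD (lF i) IHr) => w; rewrite big_cons.
Qed.

Lemma laurent_prod (I : Type) (r : seq I) (F : I -> C -> C) :
  (forall i, laurent (F i)) -> laurent (fun w => \prod_(i <- r) F i w).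
Proof.
move=> lF; elim: r => [|i r IHr].
  by apply: eq_laurent (laurent_cst 1) => w; rewrite big_nil.
by apply: eq_laurent (laurentM (lF i) IHr) => w; rewrite big_cons.
Qed.

Lemma laurent_meval k (p : {mpoly C[k]}) (v : 'I_k -> C -> C) :
  (forall i, laurent (v i)) -> laurent (fun w => p.@[fun i => v i w]).
Proof.
move=> lv.
apply: (@eq_laurent (fun w => \sum_(mu <- msupp p)
  p@_mu * \prod_(i <- index_enum 'I_k) v i w ^+ mu i)) => [w|]; first by rewrite mevalE.
apply: laurent_sum => mu; apply: laurentM; first exact: laurent_cst.
by apply: (@laurent_prod _ _ (fun i w => v i w ^+ mu i)) => i; apply: laurentX.
Qed.

Lemma expr_inj x : x != 0 -> ~ is_root_of_unity x -> injective (fun k => x ^+ k).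
Proof.
move=> x0 x_nroot i j /= eq_xij; wlog le_ij : i j eq_xij / (i <= j)%N.
  by move=> W; case/orP: (leq_total i j) => ?; [|symmetry]; apply: W.
apply/eqP; rewrite eqn_leq le_ij leqNgt; apply/negP => lt_ij; apply: x_nroot.
exists (j - i)%N; split; first by rewrite subn_gt0.
apply: (@mulfI _ (x ^+ i)); first exact: expf_neq0.
by rewrite -exprD subnKC ?(ltnW lt_ij) // mulr1 eq_xij.
Qed.

(* A nonzero polynomial has finitely many roots, while the powers of [x] are
   pairwise distinct. *)
Lemma laurent_eq0 f x : laurent f -> x != 0 -> ~ is_root_of_unity x ->
  (forall k, f (x ^+ k) = 0) -> forall w, w != 0 -> f w = 0.
Proof.
move=> [N [P fP]] x0 x_nroot f_x w w0.
suff P0 : P = 0.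
  by move/eqP: (fP w w0); rewrite P0 horner0 mulf_eq0 expf_eq0 (negbTE w0) andbF => /eqP.
apply/eqP; apply: contraT => P_neq0; rewrite -(ltnn (size P)).
rewrite -[X in (X < _)%N](size_mkseq (fun k => x ^+ k)).
apply: max_poly_roots => //; last exact/mkseq_uniq/expr_inj.
by apply/allP => _ /mapP[k _ ->]; rewrite /root -fP ?expf_neq0 // f_x mulr0.
Qed.

End LaurentFunctions.

Ltac case_indices :=
  repeat (case: eqP => /= ?; try (exfalso; lia)); rewrite ?mulr1n ?mulr0n.

Section MatrixBasics.
Variable C : fieldType.

Lemma sum_delta m (F : nat -> C) i : (i < m)%N ->
  \sum_(l < m) ((l == i :> nat)%:R * F l) = F i.
Proof.
move=> lt_im; rewrite (bigD1 (Ordinal lt_im)) //= eqxx mul1r big1 ?addr0 // => l.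
by rewrite -val_eqE => /negbTE /= ->; rewrite mul0r.
Qed.

Definition evec m j : 'cV[C]_m := \col_r (r == j :> nat)%:R.

Lemma mulmx_evec m n (A : 'M[C]_(m, n)) (j : 'I_n) r : (A *m evec n j) r 0 = A r j.
Proof.
rewrite mxE (bigD1 j) //= mxE eqxx mulr1 big1 ?addr0 // => l.
by rewrite mxE -val_eqE => /negbTE ->; rewrite mulr0.
Qed.

Lemma evec_inj m (A B : 'M[C]_m) :
  (forall j : 'I_m, A *m evec m j = B *m evec m j) -> A = B.
Proof. by move=> eqAB; apply/matrixP => r c; rewrite -(mulmx_evec A) -(mulmx_evec B) eqAB. Qed.

Lemma scalemxX m (c : C) (M : 'M[C]_m) k : (c *: M) ^+ k = c ^+ k *: M ^+ k.
Proof.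
elim: k => [|k IHk]; first by rewrite !expr0 scale1r.
by rewrite !exprS -!mulmxE IHk -scalemxAr -scalemxAl scalerA mulrC.
Qed.

End MatrixBasics.

Arguments evec {C} m j.

Section Pencil.
Variables (C : fieldType) (a b : C).
Implicit Types (m i j : nat) (x y : C).

Definition proj_row i l : C :=
  if l == i then 1 else if l.+1 == i then - b else if l == i.+1 then - a else 0.

(* [proj_mx m i] is the rank-one idempotent with row [i] equal to [proj_row i];
   [pencil_mx m i x y] acts as [y] on its image and as [x] on its kernel. *)
Definition proj_mx m i : 'M[C]_m := \matrix_(r, c) ((r == i :> nat)%:R * proj_row i c).

Definition pencil_mx m i x y : 'M[C]_m := x%:M + (y - x) *: proj_mx m i.

Lemma proj_mx_idem m i : (i < m)%N -> proj_mx m i *m proj_mx m i = proj_mx m i.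
Proof.
move=> lt_im; apply/matrixP => r c; rewrite !mxE.
rewrite (eq_bigr (fun l : 'I_m =>
  (l == i :> nat)%:R * ((r == i :> nat)%:R * proj_row i l * proj_row i c))).
  rewrite (@sum_delta _ m (fun l => (r == i :> nat)%:R * proj_row i l * proj_row i c)) //.
  by rewrite /proj_row eqxx mulr1.
by move=> l _; rewrite !mxE; ring.
Qed.

Lemma proj_mx_evec m i j : (j < m)%N -> proj_mx m i *m evec m j = proj_row i j *: evec m i.
Proof.
move=> lt_jm; apply/matrixP => r c; rewrite ord1 -[j]/(Ordinal lt_jm : nat).
by rewrite mulmx_evec !mxE mulrC.
Qed.

Lemma pencil_mxM m i x y x' y' : (i < m)%N ->
  pencil_mx m i x y *m pencil_mx m i x' y' = pencil_mx m i (x * x') (y * y').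
Proof.
move=> lt_im; rewrite /pencil_mx mulmxDl !mulmxDr !mul_scalar_mx !mul_mx_scalar.
rewrite -!scalemxAl -!scalemxAr proj_mx_idem // !scalerA.
by apply/matrixP => r c; rewrite !mxE; ring.
Qed.

Lemma pencil_mx11 m i : pencil_mx m i 1 1 = 1%:M.
Proof. by rewrite /pencil_mx subrr scale0r addr0. Qed.

Lemma scale_pencil_mx m i s x y : s *: pencil_mx m i x y = pencil_mx m i (s * x) (s * y).
Proof. by rewrite /pencil_mx scalerDr scale_scalar_mx scalerA mulrBr. Qed.

Lemma pencil_mx_unit m i x y : (i < m)%N -> x != 0 -> y != 0 ->
  pencil_mx m i x y \in unitmx.
Proof.
move=> lt_im x0 y0; have := pencil_mxM x y x^-1 y^-1 lt_im.
by rewrite !divff // pencil_mx11 => /mulmx1_unit[].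
Qed.

Lemma pencil_mxX m i x y k : (i < m)%N ->
  pencil_mx m i x y ^+ k = pencil_mx m i (x ^+ k) (y ^+ k).
Proof.
move=> lt_im; elim: k => [|k IHk]; first by rewrite !expr0 pencil_mx11.
by rewrite !exprS -mulmxE IHk pencil_mxM.
Qed.

Lemma pencil_mx_evec m i x y j : (j < m)%N ->
  pencil_mx m i x y *m evec m j = x *: evec m j + ((y - x) * proj_row i j) *: evec m i.
Proof.
move=> lt_jm; rewrite mulmxDl mul_scalar_mx -scalemxAl proj_mx_evec //.
by rewrite scalerA.
Qed.

Lemma laurent_pencil_mx m i (x y : C -> C) (p : {mpoly C[m * m]}) :
  laurent x -> laurent y ->
  laurent (fun w => p.@[mx_coords (pencil_mx m i (x w) (y w))]).
Proof.
move=> lx ly; apply: laurent_meval => k; case/mxvec_indexP: k => r c.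
apply: (@eq_laurent _ (fun w => x w * (r == c)%:R
  + (y w + (-1) * x w) * ((r == i :> nat)%:R * proj_row i c))) => [w|].
  by rewrite /mx_coords mxvecE !mxE mulr_natr mulN1r.
apply: laurentD; first by apply: laurentM; last exact: laurent_cst.
apply: laurentM; last exact: laurent_cst.
by apply: laurentD => //; apply: laurentM => //; exact: laurent_cst.
Qed.

Lemma Hmx_pencil m (i : 'I_m) z : Hmx a b i z = pencil_mx m i 1 z.
Proof.
apply/matrixP => r c; rewrite !mxE /proj_row -!val_eqE /=.
by case_indices; ring.
Qed.

Lemma Kmx_pencil n (i : 'I_n.-1) w : Kmx a b i w = pencil_mx n.-1 i w (w ^- (n - 2)).
Proof.
apply/matrixP => r c; rewrite !mxE /proj_row -!val_eqE /=.
by case_indices; ring.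
Qed.

End Pencil.

Section Burau.
Variables (C : fieldType) (n : nat) (q1 q2 : C).
Local Notation q := (- q2 / q1).
Local Notation a := (q / (1 + q)).
Local Notation b := (1 / (1 + q)).

Definition Fentry k j : C := if k == j then q2 else if k == j.+1 then q1 else 0.

(* The Burau generator is [q1 + f_g (e_g - e_(g+1))^T], and
   [(q2 - q1) proj_row g j = Fentry g j - Fentry g.+1 j]. *)
Lemma Fmx_pencil (g : 'I_n.-1) : q1 != 0 -> 1 + q != 0 ->
  Fmx n q1 q2 *m pencil_mx a b n.-1 g q1 q2 = burau_gen q1 q2 g *m Fmx n q1 q2.
Proof.
move=> q1_neq0 q_neqN1.
have q1Bq2_neq0 : q1 - q2 != 0.
  apply: contraNneq q_neqN1 => /eqP; rewrite subr_eq0 => /eqP <-.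
  by rewrite mulNr divff // subrr.
have lt_g1n : (g.+1 < n)%N by case: n g => [|[|n']] [g' lt_g'].
apply/matrixP => k j; rewrite !mxE.
rewrite (eq_bigr (fun l : 'I_n.-1 => (l == j :> nat)%:R * (q1 * Fentry k l)
    + (l == g :> nat)%:R * ((q2 - q1) * proj_row a b g j * Fentry k l))); last first.
  by move=> l _; rewrite /Fmx /pencil_mx /proj_mx /Fentry !mxE -!val_eqE /=; case_indices; ring.
rewrite big_split /= (@sum_delta _ n.-1 (fun l => q1 * Fentry k l)) //.
rewrite (@sum_delta _ n.-1 (fun l => (q2 - q1) * proj_row a b g j * Fentry k l)) //.
rewrite (eq_bigr (fun l : 'I_n => (l == k :> nat)%:R * (q1 * Fentry l j)
    + ((l == g :> nat)%:R * (Fentry k g * Fentry l j)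
    - (l == g.+1 :> nat)%:R * (Fentry k g * Fentry l j)))); last first.
  by move=> l _; rewrite /Fmx /burau_gen /Fentry !mxE -!val_eqE /=; case_indices; ring.
rewrite !big_split /= sumrN (@sum_delta _ n (fun l => q1 * Fentry l j)) //.
rewrite (@sum_delta _ n (fun l => Fentry k g * Fentry l j)) ?(ltnW lt_g1n) //.
rewrite (@sum_delta _ n (fun l => Fentry k g * Fentry l j)) //.
by rewrite /Fentry /proj_row; case_indices; field; rewrite ?q1_neq0 ?q1Bq2_neq0.
Qed.

End Burau.

Section Twist.
Variables (C : fieldType) (m : nat) (q a b : C).
Hypotheses (hb : (1 + q) * b = 1) (ha : (1 + q) * a = q).

Local Notation A g := (pencil_mx a b m g 1 (- q)).
Local Notation e := (@evec C m).

Definition step_coef g j : C :=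
  if j == g then - q - 1 else if j.+1 == g then 1 else if j == g.+1 then q else 0.

Lemma step_evec g j : (j < m)%N -> A g *m e j = e j + step_coef g j *: e g.
Proof.
move=> lt_jm; rewrite pencil_mx_evec // scale1r; congr (_ + _ *: _).
rewrite /proj_row /step_coef; case_indices; rewrite ?mulr0 ?mulr1 //.
  by rewrite -[RHS]hb; ring.
by rewrite -[RHS]ha; ring.
Qed.

Definition twist_part k t := foldr (fun g M => A g *m M) 1%:M (iota k t).

Lemma twist_partS k t : twist_part k t.+1 = A k *m twist_part k.+1 t.
Proof. by []. Qed.

Lemma twist_part_evec_low t : forall k j, (k + t = m)%N -> (j.+1 < k)%N ->
  twist_part k t *m e j = e j.
Proof.
elim: t => [|t IHt] k j def_m lt_j1k; first by rewrite mul1mx.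
rewrite twist_partS -mulmxA IHt ?addSnnS // ?step_evec; try lia.
by rewrite /step_coef; case_indices; rewrite scale0r addr0.
Qed.

Lemma twist_part_evec_prev t k j : (k + t.+1 = m)%N -> j.+1 = k ->
  twist_part k t.+1 *m e j = e j + e k.
Proof.
move=> def_m def_k; rewrite twist_partS -mulmxA twist_part_evec_low ?step_evec; try lia.
by rewrite /step_coef; case_indices; rewrite scale1r.
Qed.

Lemma twist_part_evec_shift t : forall k j, (k + t = m)%N -> (k <= j)%N ->
  (j.+1 < m)%N -> twist_part k t *m e j = e j.+1.
Proof.
elim: t => [|t IHt] k j def_m le_kj lt_j1m; first by exfalso; lia.
rewrite twist_partS -mulmxA; case: (ltngtP k j) => [lt_kj|lt_jk|eq_kj].
- rewrite IHt ?step_evec; try lia.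
  by rewrite /step_coef; case_indices; rewrite scale0r addr0.
- by exfalso; lia.
case: t {IHt} def_m => [|t] def_m; first by exfalso; lia.
rewrite -eq_kj twist_part_evec_prev ?mulmxDr ?step_evec; try lia.
by rewrite /step_coef; case_indices; apply/matrixP => r c; rewrite !mxE; ring.
Qed.

Lemma twist_part_evec_last t : forall k, (k + t = m)%N -> (k < m)%N ->
  twist_part k t *m e m.-1 = - \sum_(k <= l < m) q ^+ (m - l) *: e l.
Proof.
elim: t => [|t IHt] k def_m lt_km; first by exfalso; lia.
rewrite twist_partS -mulmxA; case: t IHt def_m => [|t] IHt def_m.
  have [-> m_k1] : m.-1 = k /\ (m - k = 1)%N by lia.
  rewrite mul1mx step_evec; last by lia.
  rewrite /index_iota m_k1 big_seq1 m_k1 expr1 /step_coef eqxx.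
  by apply/matrixP => r c; rewrite !mxE; ring.
rewrite IHt ?addSnnS ?mulmxN ?mulmx_sumr; try lia.
rewrite [in RHS]big_ltn //; congr (- _).
rewrite (eq_big_nat _ _ (F2 := fun l => q ^+ (m - l) *: e l
    + (q ^+ (m - l) * step_coef k l) *: e k)); last first.
  by move=> l lt_l; rewrite -scalemxAr step_evec; [rewrite scalerDr scalerA | lia].
rewrite big_split /= addrC big_ltn; last by lia.
rewrite big_nat_cond big1 ?addr0 => [|l /andP[/andP[lt_kl lt_lm] _]]; last first.
  by rewrite /step_coef; case_indices; rewrite mulr0 scale0r.
have -> : (m - k = (m - k.+1).+1)%N by lia.
by rewrite /step_coef; case_indices; rewrite exprSr.
Qed.

(* [twist] is [rho(sigma_1 ... sigma_m) / q1 ^+ m] for [m = n - 1].  It maps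
   [e_j] to [e_(j+1)] for [j < m - 1], [e_(m-1)] to [- z] and [z] to
   [- q ^+ m.+1 *: e_0], where [z = twist_vec]; as [e_j = twist ^+ j e_0], the
   power [twist ^+ m.+1] is the scalar [q ^+ m.+1]. *)
Definition twist := twist_part 0 m.
Definition twist_vec := \sum_(0 <= l < m) q ^+ (m - l) *: e l.

Lemma twist_evec j : (j.+1 < m)%N -> twist *m e j = e j.+1.
Proof. by move=> lt_j1m; apply: twist_part_evec_shift. Qed.

Lemma twist_evec_last : (0 < m)%N -> twist *m e m.-1 = - twist_vec.
Proof. by move=> m_gt0; apply: twist_part_evec_last. Qed.

Lemma twist_twist_vec : (0 < m)%N -> twist *m twist_vec = - (q ^+ m.+1) *: e 0.
Proof.
move=> m_gt0; set m' := m.-1; have def_m : m = m'.+1 by rewrite /m'; lia.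
have iota_m : index_iota 0 m = index_iota 0 m'.+1 by rewrite -def_m.
have vec_recr : twist_vec = \sum_(0 <= l < m') q ^+ (m - l) *: e l + q ^+ (m - m') *: e m'.
  by rewrite /twist_vec iota_m big_nat_recr.
have vec_recl : twist_vec = q ^+ m *: e 0 + \sum_(0 <= l < m') q ^+ (m - l.+1) *: e l.+1.
  by rewrite /twist_vec iota_m big_nat_recl // subn0.
rewrite {1}vec_recr mulmxDr mulmx_sumr -scalemxAr twist_evec_last //.
rewrite (eq_big_nat _ _ (F2 := fun l => q ^+ (m - l) *: e l.+1)); last first.
  by move=> l lt_l; rewrite -scalemxAr twist_evec //; lia.
have -> : (m - m' = 1)%N by lia.
rewrite expr1 vec_recl scalerN scalerDr scaler_sumr scalerA -exprS.
rewrite (eq_big_nat _ _ (F1 := fun l => q *: (q ^+ (m - l.+1) *: e l.+1))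
   (F2 := fun l => q ^+ (m - l) *: e l.+1)); last first.
  by move=> l lt_l; rewrite scalerA -exprS; congr (_ ^+ _ *: _); lia.
by rewrite opprD addrCA subrr addr0 scaleNr.
Qed.

Lemma twistX_evec0 j : (j < m)%N -> twist ^+ j *m e 0 = e j.
Proof.
elim: j => [|j IHj] lt_jm; first by rewrite expr0 mul1mx.
by rewrite exprS -mulmxE -mulmxA IHj ?twist_evec // ltnW.
Qed.

Lemma twistX : (0 < m)%N -> twist ^+ m.+1 = (q ^+ m.+1)%:M.
Proof.
move=> m_gt0; have twistX_e0 : twist ^+ m.+1 *m e 0 = q ^+ m.+1 *: e 0.
  have -> : twist ^+ m.+1 = twist * (twist * twist ^+ m.-1).
    by rewrite -!exprS prednK.
  rewrite -!mulmxE -!mulmxA twistX_evec0; last by lia.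
  by rewrite twist_evec_last // mulmxN twist_twist_vec // scaleNr opprK.
apply: evec_inj => j; rewrite -twistX_evec0 // mulmxA mulmxE -exprD addnC.
by rewrite exprD -mulmxE -mulmxA twistX_e0 -scalemxAr mul_scalar_mx.
Qed.

End Twist.

Section RootsOfUnity.
Variable C : fieldType.
Implicit Types x y : C.

Lemma root_of_unityX x k : is_root_of_unity x -> is_root_of_unity (x ^+ k).
Proof. by move=> [j [j_gt0 xj1]]; exists j; rewrite exprAC xj1 expr1n. Qed.

Lemma root_of_unityXK x k : (0 < k)%N -> is_root_of_unity (x ^+ k) -> is_root_of_unity x.
Proof. by move=> k_gt0 [j [j_gt0 xkj1]]; exists (k * j)%N; rewrite muln_gt0 k_gt0 exprM. Qed.

Lemma root_of_unityM x y :
  is_root_of_unity x -> is_root_of_unity y -> is_root_of_unity (x * y).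
Proof.
move=> [j [j_gt0 xj1]] [k [k_gt0 yk1]]; exists (j * k)%N.
by rewrite muln_gt0 j_gt0 exprMn exprM xj1 mulnC exprM yk1 !expr1n mulr1.
Qed.

Lemma root_of_unityV x : is_root_of_unity x -> is_root_of_unity x^-1.
Proof. by move=> [j [j_gt0 xj1]]; exists j; rewrite exprVn xj1 invr1. Qed.

Lemma root_of_unityN x : is_root_of_unity (- x) <-> is_root_of_unity x.
Proof.
suff sqr_root y : is_root_of_unity y -> is_root_of_unity (- y).
  by split=> /sqr_root; rewrite ?opprK.
move=> [j [j_gt0 yj1]]; exists (2 * j)%N.
by rewrite muln_gt0 j_gt0 exprM sqrrN -exprM mulnC exprM yj1 expr1n.
Qed.

End RootsOfUnity.

Section ZariskiClosure.
Variables (C : fieldType) (m : nat) (S : 'M[C]_m -> Prop).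

Definition zariski_closure (g : 'M[C]_m) := forall p : {mpoly C[m * m]},
  (forall h, S h -> p.@[mx_coords h] = 0) -> p.@[mx_coords g] = 0.

Lemma mem_zariski_closure h : S h -> zariski_closure h.
Proof. by move=> Sh p; apply. Qed.

Lemma zariski_closure_laurent (G : C -> 'M[C]_m) u :
  (forall p : {mpoly C[m * m]}, laurent (fun w => p.@[mx_coords (G w)])) ->
  u != 0 -> ~ is_root_of_unity u -> (forall k, zariski_closure (G (u ^+ k))) ->
  forall w, w != 0 -> zariski_closure (G w).
Proof.
move=> lG u_neq0 u_nroot Gu w w_neq0 p pS.
by apply: (laurent_eq0 (lG p) u_neq0 u_nroot) => // k; apply: Gu.
Qed.

Lemma zariski_closure_scale (h : 'M[C]_m) c :
  c != 0 -> ~ is_root_of_unity c -> (forall l, S (c ^+ l *: h)) ->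
  forall s, s != 0 -> zariski_closure (s *: h).
Proof.
move=> c_neq0 c_nroot Sh.
apply: (zariski_closure_laurent (G := fun s => s *: h) _ c_neq0 c_nroot) => [p|l].
  apply: laurent_meval => k; apply: (@eq_laurent _ (fun s => s * mx_coords h k)).
    by move=> s; rewrite /mx_coords linearZ !mxE.
  by apply: laurentM; [exact: laurent_id | exact: laurent_cst].
exact: mem_zariski_closure.
Qed.

End ZariskiClosure.

Section RhoImage.
Variables (C : fieldType) (n : nat) (q1 q2 : C).
Local Notation rho := (@rho_image C n q1 q2).

Lemma rho_image1 : rho 1%:M.
Proof. by exists [::]; rewrite mulmx1 mul1mx. Qed.

Lemma rho_imageM M N : rho M -> rho N -> rho (M *m N).
Proof.
move=> [v FM] [w FN]; exists (v ++ w).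
have -> : burau_word q1 q2 (v ++ w) = burau_word q1 q2 v *m burau_word q1 q2 w.
  by elim: v {FM} => [|l v IHv] /=; rewrite ?mul1mx // IHv mulmxA.
by rewrite mulmxA FM -!mulmxA FN.
Qed.

Lemma rho_imageX M k : rho M -> rho (M ^+ k).
Proof.
move=> rhoM; elim: k => [|k IHk]; first exact: rho_image1.
by rewrite exprS -mulmxE; apply: rho_imageM.
Qed.

Hypotheses (q1_neq0 : q1 != 0) (q_neqN1 : 1 + - q2 / q1 != 0).
Local Notation q := (- q2 / q1).
Local Notation a := (q / (1 + q)).
Local Notation b := (1 / (1 + q)).

Lemma rho_image_pencil (g : 'I_n.-1) : rho (pencil_mx a b n.-1 g q1 q2).
Proof. by exists [:: (g, true)]; rewrite /= mulmx1 Fmx_pencil. Qed.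

Lemma rho_image_scalar : (0 < n.-1)%N -> rho (((q1 ^+ n.-1 * q) ^+ n)%:M).
Proof.
move=> n1_gt0.
have genE g : pencil_mx a b n.-1 g q1 q2 = q1 *: pencil_mx a b n.-1 g 1 (- q).
  by rewrite scale_pencil_mx mulr1; congr pencil_mx; field.
have prod_gens s : all (fun g => g < n.-1)%N s ->
    rho (q1 ^+ size s *: foldr (fun g M => pencil_mx a b n.-1 g 1 (- q) *m M) 1%:M s).
  elim: s => [_|g s IHs /andP[lt_gn /IHs rho_s]] /=.
    by rewrite scale1r; exact: rho_image1.
  rewrite exprS -scalerA scalemxAr scalemxAl -genE.
  exact: rho_imageM (rho_image_pencil (Ordinal lt_gn)) rho_s.
have := rho_imageX n (prod_gens (iota 0 n.-1) _); rewrite size_iota scalemxX.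
have hb : (1 + q) * b = 1 by rewrite mul1r mulfV.
have ha : (1 + q) * a = q by rewrite mulrCA mulfV // mulr1.
have := twistX hb ha n1_gt0; rewrite prednK; last by lia.
rewrite /twist /twist_part => ->; rewrite scale_scalar_mx -exprMn.
by apply; apply/allP => g; rewrite mem_iota.
Qed.

End RhoImage.

Section RhoClosure.
Variables (C : fieldType) (n : nat) (q1 q2 : C) (i : 'I_n.-1).
Hypotheses (q1_neq0 : q1 != 0) (q_neqN1 : 1 + - q2 / q1 != 0).
Hypothesis q_nroot : ~ is_root_of_unity (- q2 / q1).
Local Notation rho := (@rho_image C n q1 q2).
Local Notation q := (- q2 / q1).
Local Notation a := (q / (1 + q)).
Local Notation b := (1 / (1 + q)).

Lemma pencil1_in_rho_closure : q2 != 0 -> (0 < n.-1)%N ->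
  ~ is_root_of_unity (q1 ^+ (n - 2) * q2) ->
  forall z, z != 0 -> zariski_closure rho (pencil_mx a b n.-1 i 1 z).
Proof.
move=> q2_neq0 n1_gt0 d_nroot.
have mqE : - q = q2 / q1 by rewrite mulNr opprK.
have mq_neq0 : - q != 0 by rewrite mqE mulf_neq0 ?invr_eq0.
have mq_nroot : ~ is_root_of_unity (- q) by move/root_of_unityN.
set c := (q1 ^+ n.-1 * q) ^+ n.
have c_neq0 : c != 0 by rewrite expf_neq0 // mulf_neq0 ?expf_neq0 // -oppr_eq0.
have c_nroot : ~ is_root_of_unity c.
  rewrite /c; have -> : q1 ^+ n.-1 * q = - (q1 ^+ (n - 2) * q2).
    have -> : n.-1 = (n - 2).+1 by lia.
    by rewrite exprSr -mulrA [q1 * _]mulrCA divff // mulr1 mulrN.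
  have n_gt0 : (0 < n)%N by lia.
  by move/(root_of_unityXK n_gt0)/root_of_unityN.
have scaled_powers k s :
    s != 0 -> zariski_closure rho (s *: pencil_mx a b n.-1 i q1 q2 ^+ k).
  apply: zariski_closure_scale c_neq0 c_nroot _ s => l.
  rewrite -mul_scalar_mx rmorphXn /=; apply: rho_imageM; apply: rho_imageX.
    exact: rho_image_scalar.
  exact: rho_image_pencil.
apply: (zariski_closure_laurent (G := pencil_mx a b n.-1 i 1) _ mq_neq0 mq_nroot).
  by move=> p; apply: laurent_pencil_mx; [exact: laurent_cst | exact: laurent_id].
move=> k; have := scaled_powers k (q1 ^+ k)^-1; rewrite invr_eq0 expf_neq0 //.
have -> : (- q) ^+ k = (q1 ^+ k)^-1 * q2 ^+ k by rewrite mqE exprMn exprVn mulrC.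
by rewrite pencil_mxX // scale_pencil_mx mulVf ?expf_neq0 //; apply.
Qed.

Lemma pencil_sl_in_rho_closure : is_root_of_unity (q1 ^+ (n - 2) * q2) ->
  forall w, w != 0 -> zariski_closure rho (pencil_mx a b n.-1 i w (w ^- (n - 2))).
Proof.
move=> [N [N_gt0 dN]]; set u := q1 ^+ N.
have u_neq0 : u != 0 by rewrite expf_neq0.
have u_nroot : ~ is_root_of_unity u.
  move=> /(root_of_unityXK N_gt0) q1_root; apply: q_nroot.
  have -> : q2 = (q1 ^+ (n - 2))^-1 * (q1 ^+ (n - 2) * q2) by rewrite mulKf ?expf_neq0.
  rewrite mulNr; apply/root_of_unityN; apply: root_of_unityM (root_of_unityV q1_root).
  by apply: root_of_unityM; [exact/root_of_unityV/root_of_unityX | exists N].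
apply: (zariski_closure_laurent (G := fun w => pencil_mx a b n.-1 i w (w ^- (n - 2))) _
  u_neq0 u_nroot) => [p|j].
  by apply: laurent_pencil_mx; [exact: laurent_id | exact: laurent_Vexp].
have q2N : q2 ^+ N = u ^- (n - 2).
  apply: (mulfI (expf_neq0 (n - 2) u_neq0)); rewrite divff ?expf_neq0 //.
  by rewrite -dN exprMn /u exprAC.
apply: mem_zariski_closure.
have := rho_imageX (N * j) (rho_image_pencil q1_neq0 q_neqN1 i).
by rewrite pencil_mxX // !exprM -/u q2N exprVn exprAC.
Qed.

End RhoClosure.

Theorem propositionA3 (R : realType) (n : nat) (q1 q2 : R[i]) :
  (2 <= n)%N -> q1 * q2 != 0 -> ~ is_root_of_unity (- q2 / q1) ->
  let q := - q2 / q1 in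
  let a := q / (1 + q) in
  let b := 1 / (1 + q) in
  let Gbar := zariski_closure_GL (@rho_image _ n q1 q2) in
  (~ is_root_of_unity (q1 ^+ (n - 2) * q2) ->
     forall (i : 'I_n.-1) (z : R[i]), z != 0 -> Gbar (Hmx a b i z)) /\
  (is_root_of_unity (q1 ^+ (n - 2) * q2) ->
     forall (i : 'I_n.-1) (w : R[i]), w != 0 -> Gbar (Kmx a b i w)).
Proof.
move=> n_ge2 q1q2_neq0 q_nroot q a b Gbar.
have q1_neq0 : q1 != 0 by apply: contraNneq q1q2_neq0 => ->; rewrite mul0r.
have q2_neq0 : q2 != 0 by apply: contraNneq q1q2_neq0 => ->; rewrite mulr0.
have q_neqN1 : 1 + q != 0.
  apply/eqP => q_eqN1; apply: q_nroot; rewrite -/q (_ : q = -1).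
    by exists 2%N; rewrite sqrrN expr1n.
  by apply: (addrI 1); rewrite q_eqN1 subrr.
have n1_gt0 : (0 < n.-1)%N by lia.
split=> [d_nroot|d_root] i w w_neq0; split.
- by rewrite Hmx_pencil pencil_mx_unit ?ltn_ord ?oner_eq0.
- by rewrite Hmx_pencil; apply: pencil1_in_rho_closure.
- by rewrite Kmx_pencil pencil_mx_unit ?ltn_ord ?invr_eq0 ?expf_neq0.
- by rewrite Kmx_pencil; apply: pencil_sl_in_rho_closure.
Qed.
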